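(* Let $A$ be a valuation ring with maximal ideal $\mathfrak m$ and residue field $k$, and assume $2\in A^\times$. Let $[u_1,\dots,u_r]$ and $[v_1,\dots,v_s]$ be possibly empty frames in $\mathbb E^n_A$ spanning quadratic submodules $U$ and $V$ respectively. Then $U^\perp\cap V^\perp$ contains a unit vector if either (i) $n\geq m_A+r+2s$; or (ii) $n\geq m_A+r+s$ and $k$ is formally real; or (iii) $n>2P(k)r+s$ and $A$ is henselian; or (iv) $n>P(k)r+s$, $A$ is henselian, and $k$ is formally real.
   Context: $\mathbb E^n_A=(A^n,q)$, $q(x)=x_1^2+\dots+x_n^2$, $B_q(x,y)=q(x+y)-q(x)-q(y)$. A unit vector is $v$ with $q(v)=1$; a frame is a finite set of unit vectors $w_i$ with $B_q(w_i,w_j)=0$ for $i\neq j$. $S^\perp=\{x:B_q(x,s)=0\ \forall s\in S\}$. A quadratic submodule is a direct summand with restricted form; a quadratic module $(V,q)$ (finitely generated projective $V$) is non-singular if $x\mapsto B_q(x,-)$ is an isomorphism $V\to\mathrm{Hom}(V,A)$. $m_A\in\mathbb Z_{\geq1}\cup\{\infty\}$ is the smallest $m$ such that every non-singular quadratic submodule $W$ of some $\mathbb E^N_A$ with $\dim_k W/\mathfrak mW\geq m$ contains a unit vector. $P(k)$ is the smallest $p\geq1$ such that every sum of squares in $k$ is a sum of $p$ squares ($\infty$ if none). A field is formally real if $-1$ is not a sum of squares. Henselian: for $f\in A[X]$, simple roots in $k$ of $\bar f$ lift to roots of $f$ in $A$. A valuation ring is a domain $A$ with fraction field $K$ such that $x\in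 A$ or $x^{-1}\in A$ for each $x\in K^\times$. *)

From HB Require Import structures.
From mathcomp Require Import all_boot all_order all_algebra.
From mathcomp Require Import fraction.
From mathcomp Require Import boolp.
Set Implicit Arguments. Unset Strict Implicit. Unset Printing Implicit Defensive.
Import Order.TTheory GRing.Theory Num.Theory.
Local Open Scope ring_scope.

(* Extended naturals Z_{>=0} u {oo}: [None] stands for oo. *)
Notation enat := (option nat).

Definition in_ring (A : idomainType) (x : {fraction A}) : Prop :=
  exists a : A, x = FracField.tofrac a.

Definition valuation_ring (A : idomainType) : Prop :=
  forall x : {fraction A}, x != 0 -> in_ring x \/ in_ring x^-1.

Definition maxideal (A : idomainType) : pred A :=
  [pred a | a \isn't a GRing.unit].
Arguments maxideal A : clear implicits.

(* k is the residue field of A, presented by a surjective ring morphism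
   pi : A -> k whose kernel is the maximal ideal. *)
Definition residue_map (A : idomainType) (k : fieldType)
  (pi : {rmorphism A -> k}) : Prop :=
  (forall c : k, exists a : A, pi a = c) /\
  (forall a : A, pi a = 0 <-> a \in maxideal A).

Definition henselian (A : idomainType) (k : fieldType)
  (pi : {rmorphism A -> k}) : Prop :=
  forall (f : {poly A}) (c : k),
    root (map_poly pi f) c -> ~~ root (map_poly pi f)^`() c ->
    exists a : A, root f a /\ pi a = c.

Definition sum_sq (k : fieldType) (m : nat) (x : 'I_m -> k) : k :=
  \sum_(i < m) x i ^+ 2.

Definition formally_real (k : fieldType) : Prop :=
  ~ exists (m : nat) (x : 'I_m -> k), sum_sq x = -1.

Definition pyth_bound (k : fieldType) (p : nat) : Prop :=
  forall (m : nat) (x : 'I_m -> k), exists y : 'I_p -> k, sum_sq x = sum_sq y.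

Definition Pyth (k : fieldType) : enat :=
  match pselect (exists p : nat, asbool ((1 <= p)%N /\ pyth_bound k p)) with
  | left h => Some (ex_minn h)
  | right _ => None
  end.

Definition qf (A : idomainType) (n : nat) (x : 'rV[A]_n) : A :=
  \sum_(i < n) x ord0 i ^+ 2.

Definition Bq (A : idomainType) (n : nat) (x y : 'rV[A]_n) : A :=
  qf (x + y) - qf x - qf y.

Definition unit_vector (A : idomainType) (n : nat) (x : 'rV[A]_n) : Prop :=
  qf x = 1.

Definition is_frame (A : idomainType) (n r : nat) (w : 'I_r -> 'rV[A]_n) : Prop :=
  (forall i, unit_vector (w i)) /\ (forall i j, i != j -> Bq (w i) (w j) = 0).

Definition span_of (A : idomainType) (n r : nat) (w : 'I_r -> 'rV[A]_n)
  (x : 'rV[A]_n) : Prop :=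
  exists c : 'I_r -> A, x = \sum_(i < r) c i *: w i.

Definition orth (A : idomainType) (n : nat) (S : 'rV[A]_n -> Prop)
  (x : 'rV[A]_n) : Prop :=
  forall y, S y -> Bq x y = 0.

Definition is_submodule (A : idomainType) (N : nat) (W : 'rV[A]_N -> Prop) : Prop :=
  [/\ W 0, (forall x y, W x -> W y -> W (x + y)) &
      (forall (a : A) x, W x -> W (a *: x))].

Definition quadratic_submodule (A : idomainType) (N : nat) (W : 'rV[A]_N -> Prop) : Prop :=
  is_submodule W /\
  exists W' : 'rV[A]_N -> Prop,
    [/\ is_submodule W', (forall x, W x -> W' x -> x = 0) &
        (forall z, exists x y, [/\ W x, W' y & z = x + y])].

Definition nonsingular (A : idomainType) (N : nat) (W : 'rV[A]_N -> Prop) : Prop :=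
  (forall x, W x -> (forall w, W w -> Bq x w = 0) -> x = 0) /\
  (forall f : 'rV[A]_N -> A,
     (forall (a : A) x y, W x -> W y -> f (a *: x + y) = a * f x + f y) ->
     exists x, W x /\ forall w, W w -> Bq x w = f w).

Definition in_mW (A : idomainType) (N : nat) (W : 'rV[A]_N -> Prop)
  (y : 'rV[A]_N) : Prop :=
  exists (l : nat) (c : 'I_l -> A) (x : 'I_l -> 'rV[A]_N),
    [/\ forall j, c j \in maxideal A, forall j, W (x j) &
        y = \sum_(j < l) c j *: x j].

(* dim_k W/mW = d : there are w_1..w_d in W whose classes form a k-basis of
   W/mW (k acting through A -> A/m). *)
Definition res_dim (A : idomainType) (N : nat) (W : 'rV[A]_N -> Prop) (d : nat) : Prop :=
  exists w : 'I_d -> 'rV[A]_N,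
    [/\ forall i, W (w i),
        (forall y, W y -> exists a : 'I_d -> A,
                    in_mW W (y - \sum_(i < d) a i *: w i)) &
        (forall a : 'I_d -> A, in_mW W (\sum_(i < d) a i *: w i) ->
                    forall i, a i \in maxideal A)].

Definition mA_good (A : idomainType) (m : nat) : Prop :=
  forall (N : nat) (W : 'rV[A]_N -> Prop),
    quadratic_submodule W -> nonsingular W ->
    (exists d, res_dim W d /\ (m <= d)%N) ->
    exists x, W x /\ unit_vector x.

Definition mA (A : idomainType) : enat :=
  match pselect (exists m : nat, asbool ((1 <= m)%N /\ mA_good A m)) with
  | left h => Some (ex_minn h)
  | right _ => None
  end.

From HB Require Import structures.
From mathcomp Require Import all_boot all_order all_algebra.
From mathcomp Require Import fraction boolp.
From mathcomp Require Import ring zify.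
Set Implicit Arguments. Unset Strict Implicit. Unset Printing Implicit Defensive.
Import GRing.Theory.
Local Open Scope ring_scope.

(* Write [dot] for the standard bilinear form, so that B_q = 2 dot.  Over a
   valuation ring every vector is a multiple of a primitive one, and a
   primitive vector w either has unit norm or, with some y orthogonal to the
   family already built and dot w y = 1, spans a hyperbolic plane with two
   orthogonal unit-norm vectors.  Hence a family of pairwise orthogonal
   unit-norm vectors F can be enlarged by a family E, with at most two vectors
   per vector of G (one if k is formally real, where primitive vectors always
   have unit norm), so that (F, E)^perp lies in G^perp.

   In cases (i) and (ii) take F = u and G = v: (u, E)^perp is a non-singular
   free direct summand of rank n - r - |E| >= m_A, so it contains a unit
   vector.  In cases (iii) and (iv) take F = v and G = u: by Hensel's lemma
   every unit-norm vector of E has a norm that is a sum of P(k) squares, so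
   v, E is isometric to a family of vectors supported on disjoint blocks of
   the first n - 1 coordinates.  Since A is local, Witt's extension theorem
   holds (each vector is moved by at most two reflections), and the
   orthogonal map realizing this isometry pulls the last coordinate vector
   back to a unit vector orthogonal to v and E, hence to u. *)

Section Dot.
Variables (R : comPzRingType) (n : nat).
Implicit Types (x y z : 'rV[R]_n) (Q : 'M[R]_n).

Definition dot x y : R := (x *m y^T) 0 0.

Lemma dotE x y : dot x y = \sum_i x 0 i * y 0 i.
Proof. by rewrite /dot mxE; apply: eq_bigr => i _; rewrite mxE. Qed.

Lemma dotC x y : dot x y = dot y x.
Proof. by rewrite !dotE; apply: eq_bigr => i _; rewrite mulrC. Qed.

Lemma dotDl x y z : dot (x + y) z = dot x z + dot y z.
Proof. by rewrite /dot mulmxDl mxE. Qed.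

Lemma dotZl a x z : dot (a *: x) z = a * dot x z.
Proof. by rewrite /dot -scalemxAl mxE. Qed.

Lemma dotNl x z : dot (- x) z = - dot x z.
Proof. by rewrite -scaleN1r dotZl mulN1r. Qed.

Lemma dotBl x y z : dot (x - y) z = dot x z - dot y z.
Proof. by rewrite dotDl dotNl. Qed.

Lemma dot0l z : dot 0 z = 0.
Proof. by rewrite -(scale0r 0) dotZl mul0r. Qed.

Lemma dotDr x y z : dot z (x + y) = dot z x + dot z y.
Proof. by rewrite dotC dotDl !(dotC z). Qed.

Lemma dotZr a x z : dot z (a *: x) = a * dot z x.
Proof. by rewrite dotC dotZl dotC. Qed.

Lemma dotNr x z : dot z (- x) = - dot z x.
Proof. by rewrite dotC dotNl dotC. Qed.

Lemma dotBr x y z : dot z (x - y) = dot z x - dot z y.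
Proof. by rewrite dotC dotBl !(dotC z). Qed.

Lemma dot0r z : dot z 0 = 0.
Proof. by rewrite dotC dot0l. Qed.

Lemma dot_suml (I : Type) (s : seq I) (P : pred I) (F : I -> 'rV[R]_n) z :
  dot (\sum_(i <- s | P i) F i) z = \sum_(i <- s | P i) dot (F i) z.
Proof. by elim/big_rec2: _ => [|i y1 y2 _ <-]; rewrite ?dot0l ?dotDl. Qed.

Lemma dot_sumr (I : Type) (s : seq I) (P : pred I) (F : I -> 'rV[R]_n) z :
  dot z (\sum_(i <- s | P i) F i) = \sum_(i <- s | P i) dot z (F i).
Proof. by rewrite dotC dot_suml; apply: eq_bigr => i _; rewrite dotC. Qed.

Lemma dot_delta x (j : 'I_n) : dot x (delta_mx 0 j) = x 0 j.
Proof. by rewrite /dot trmx_delta -colE mxE. Qed.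

Definition orthogonal_mx Q : Prop := Q *m Q^T = 1%:M.

Lemma dot_orthogonal_mx Q x y :
  orthogonal_mx Q -> dot (x *m Q) (y *m Q) = dot x y.
Proof. by move=> oQ; rewrite /dot trmx_mul mulmxA -(mulmxA x) oQ mulmx1. Qed.

Lemma orthogonal_mxM P Q :
  orthogonal_mx P -> orthogonal_mx Q -> orthogonal_mx (P *m Q).
Proof. by move=> oP oQ; rewrite /orthogonal_mx trmx_mul mulmxA -(mulmxA P) oQ mulmx1. Qed.

Lemma orthogonal_mx_tr Q : orthogonal_mx Q -> orthogonal_mx Q^T.
Proof. by move=> oQ; rewrite /orthogonal_mx trmxK; exact: mulmx1C. Qed.

End Dot.

Section UnitOrthogonal.
Variables (R : comUnitRingType) (n : nat).
Implicit Types (F E : seq 'rV[R]_n) (x y z : 'rV[R]_n).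

Definition unit_orthogonal F : bool :=
  pairwise (fun a b => dot a b == 0) F && all (fun a => dot a a \is a GRing.unit) F.

Definition perp F x : Prop := forall f, f \in F -> dot x f = 0.

Definition proj F x : 'rV[R]_n := \sum_(f <- F) (dot x f / dot f f) *: f.

Lemma unit_orthogonal_cons z F : unit_orthogonal (z :: F) =
  [&& dot z z \is a GRing.unit, all (fun f => dot z f == 0) F & unit_orthogonal F].
Proof.
rewrite /unit_orthogonal pairwise_cons /=.
by case: (_ \is a _); case: (all _ F); case: (pairwise _ F); case: (all _ F).
Qed.

Lemma unit_orthogonal_cat F E : unit_orthogonal (F ++ E) =
  [&& unit_orthogonal F, unit_orthogonal E & allrel (fun a b => dot a b == 0) F E].
Proof.
rewrite /unit_orthogonal pairwise_cat all_cat.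
by case: (allrel _ F E); case: (pairwise _ F); case: (pairwise _ E);
   case: (all _ F); case: (all _ E).
Qed.

Lemma unit_orthogonal_catP F E :
  unit_orthogonal F -> unit_orthogonal E -> (forall e, e \in E -> perp F e) ->
  unit_orthogonal (F ++ E).
Proof.
move=> oF oE FE; rewrite unit_orthogonal_cat oF oE; apply/allrelP => f e hf he.
by rewrite dotC FE.
Qed.

Lemma perp0 F : perp F 0.
Proof. by move=> f _; rewrite dot0l. Qed.

Lemma perpD F x y : perp F x -> perp F y -> perp F (x + y).
Proof. by move=> hx hy f hf; rewrite dotDl hx ?hy ?addr0. Qed.

Lemma perpZ F a x : perp F x -> perp F (a *: x).
Proof. by move=> hx f hf; rewrite dotZl hx ?mulr0. Qed.

Lemma perpB F x y : perp F x -> perp F y -> perp F (x - y).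
Proof. by move=> hx hy; apply: perpD => //; rewrite -scaleN1r; apply: perpZ. Qed.

Lemma perp_sum F (I : Type) (s : seq I) (P : pred I) (G : I -> 'rV[R]_n) :
  (forall i, P i -> perp F (G i)) -> perp F (\sum_(i <- s | P i) G i).
Proof. by move=> hG f hf; rewrite dot_suml big1 // => i /hG ->. Qed.

Lemma perp_cat F E x : perp (F ++ E) x <-> perp F x /\ perp E x.
Proof.
split=> [h|[hF hE] f]; last by rewrite mem_cat => /orP [/hF|/hE].
by split=> f hf; apply: h; rewrite mem_cat hf ?orbT.
Qed.

Lemma proj1E z x : proj [:: z] x = (dot x z / dot z z) *: z.
Proof. exact: big_seq1. Qed.

Lemma proj0 F : proj F 0 = 0.
Proof. by rewrite /proj big1 // => f _; rewrite dot0l mul0r scale0r. Qed.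

Lemma projD F x y : proj F (x + y) = proj F x + proj F y.
Proof. by rewrite /proj -big_split; apply: eq_bigr => f _; rewrite dotDl mulrDl scalerDl. Qed.

Lemma projZ F a x : proj F (a *: x) = a *: proj F x.
Proof. by rewrite /proj scaler_sumr; apply: eq_bigr => f _; rewrite dotZl scalerA mulrA. Qed.

Lemma projB F x y : proj F (x - y) = proj F x - proj F y.
Proof. by rewrite projD -scaleN1r projZ scaleN1r. Qed.

Lemma proj_sum F (I : Type) (s : seq I) (c : I -> R) (G : I -> 'rV[R]_n) :
  proj F (\sum_(i <- s) c i *: G i) = \sum_(i <- s) c i *: proj F (G i).
Proof.
by elim/big_rec2: _ => [|i y1 y2 _ <-]; rewrite ?proj0 ?projD ?projZ.
Qed.

Lemma dot_proj_perp F x y : perp F y -> dot (proj F x) y = 0.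
Proof.
by move=> hy; rewrite dot_suml big1_seq // => f hf; rewrite dotZl (dotC f) hy ?mulr0.
Qed.

Lemma proj_perp F x : perp F x -> proj F x = 0.
Proof. by move=> hx; rewrite /proj big1_seq // => f hf; rewrite hx // mul0r scale0r. Qed.

Lemma dot_proj F x f : unit_orthogonal F -> f \in F -> dot (proj F x) f = dot x f.
Proof.
elim: F => [|g F IH] //; rewrite unit_orthogonal_cons => /and3P [ug /allP gF oF].
rewrite /proj big_cons -/(proj F x) dotDl dotZl in_cons => /orP [/eqP->|hf].
  by rewrite dot_proj_perp ?addr0 ?divrK // => h /gF /eqP; rewrite dotC.
by rewrite IH // dotC (eqP (gF f hf)) mulr0 add0r.
Qed.

Lemma perp_sub_proj F x : unit_orthogonal F -> perp F (x - proj F x).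
Proof. by move=> oF f hf; rewrite dotBl dot_proj // subrr. Qed.

End UnitOrthogonal.

Section Blocks.
Variables (R : comPzRingType) (n : nat).
Implicit Types (y : 'rV[R]_n) (z : nat -> R).

Definition supported y (a b : nat) : Prop :=
  forall i : 'I_n, ~~ (a <= i < b)%N -> y 0 i = 0.

Lemma dot_supported y y' a b c : supported y a b -> supported y' b c -> dot y y' = 0.
Proof.
move=> hy hy'; rewrite dotE big1 // => i _.
have [/andP [_ ib]|/hy ->] := boolP (a <= i < b)%N; last by rewrite mul0r.
by rewrite hy' ?mulr0 // negb_and -ltnNge ib.
Qed.

Lemma supported_widen y a b a' b' :
  supported y a b -> (a' <= a)%N -> (b <= b')%N -> supported y a' b'.
Proof.
move=> hy aa bb i hi; apply: hy; apply: contra hi => /andP [ai ib].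
by rewrite (leq_trans aa ai) (leq_trans ib bb).
Qed.

Definition block_row (o P : nat) z : 'rV[R]_n :=
  \row_i if (o <= i < o + P)%N then z (i - o)%N else 0.

Lemma supported_block_row o P z : supported (block_row o P z) o (o + P).
Proof. by move=> i hi; rewrite mxE (negPf hi). Qed.

Lemma dot_block_row o P z : (o + P <= n)%N ->
  dot (block_row o P z) (block_row o P z) = \sum_(l < P) z l ^+ 2.
Proof.
move=> hn; have -> : \sum_(l < P) z l ^+ 2 = \sum_(o <= i < o + P) z (i - o)%N ^+ 2.
  by rewrite -{1}(add0n o) big_addn addKn big_mkord; apply: eq_bigr => i _; rewrite addnK.
rewrite (@big_nat_widenl _ _ _ o 0) // (@big_nat_widen _ _ _ 0 (o + P)%N n) // big_mkcond.
rewrite dotE big_mkord; apply: eq_bigr => i _; rewrite !mxE /=.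
by case: ifP; rewrite ?mulr0 ?expr2.
Qed.

Lemma disjoint_block_copies P (E : seq 'rV[R]_n) o :
  (forall e, e \in E -> exists z, \sum_(l < P) z l ^+ 2 = dot e e) ->
  (o + P * size E <= n)%N ->
  exists L : seq ('rV[R]_n * 'rV[R]_n), [/\ map fst L = E,
    all (fun p => dot p.2 p.2 == dot p.1 p.1) L,
    pairwise (fun p q => dot p.2 q.2 == 0) L &
    forall p, p \in L -> supported p.2 o (o + P * size E)].
Proof.
elim: E o => [|e E IH] o hz hn; first by exists [::].
have [z ze] := hz e (mem_head _ _).
have hn' : (o + P + P * size E <= n)%N by move: hn => /=; nia.
have [|L [LE Ln Lo Ls]] := IH (o + P)%N _ hn'.
  by move=> f hf; apply: hz; rewrite inE hf orbT.
have sy := @supported_block_row o P z.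
exists ((e, block_row o P z) :: L); split => /=; first by rewrite LE.
- by rewrite Ln dot_block_row ?ze ?eqxx //; move: hn'; lia.
- rewrite Lo andbT; apply/allP => p hp /=.
  by apply/eqP; apply: dot_supported sy (Ls p hp).
- move=> p; rewrite inE => /orP [/eqP -> /=|hp].
    by apply: supported_widen sy _ _; rewrite // leq_add2l leq_pmulr.
  by apply: supported_widen (Ls p hp) _ _; rewrite ?leq_addr //= -addnA mulnS.
Qed.

End Blocks.

Lemma unit_neq0 (R : unitRingType) (a : R) : a \is a GRing.unit -> a != 0.
Proof. by apply: contraTneq => ->; rewrite unitr0. Qed.

Lemma mA_good_Some (A : idomainType) m : mA A = Some m -> mA_good A m.
Proof. by rewrite /mA; case: pselect => // h [<-]; case: ex_minnP => m' /asboolP []. Qed.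

Lemma pyth_bound_Some (k : fieldType) p : Pyth k = Some p -> pyth_bound k p.
Proof. by rewrite /Pyth; case: pselect => // h [<-]; case: ex_minnP => p' /asboolP []. Qed.

Section LocalRing.
Variables (A : idomainType) (k : fieldType) (pi : {rmorphism A -> k}).
Hypothesis Hk : residue_map pi.
Hypothesis H2 : (2%:R : A) \is a GRing.unit.
Variable n : nat.
Implicit Types (x y z w : 'rV[A]_n) (F E G : seq 'rV[A]_n).

Lemma residue_unitE (a : A) : (a \is a GRing.unit) = (pi a != 0).
Proof.
case: Hk => _ ker; apply/idP/idP => [ua|]; first by apply/eqP => /ker; rewrite inE ua.
by apply: contraR => na; apply/eqP/ker; rewrite inE.
Qed.

Lemma qf_dot x : qf x = dot x x.
Proof. by rewrite /qf dotE; apply: eq_bigr => i _; rewrite expr2. Qed.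

Lemma Bq_dot x y : Bq x y = 2%:R * dot x y.
Proof. by rewrite /Bq !qf_dot dotDl !dotDr (dotC y x); ring. Qed.

Lemma Bq_eq0 x y : (Bq x y = 0) <-> (dot x y = 0).
Proof.
rewrite Bq_dot; split=> [/eqP|->]; last by rewrite mulr0.
by rewrite mulf_eq0 (negPf (unit_neq0 H2)) => /eqP.
Qed.

Definition reflmx w : 'M[A]_n := 1%:M - (2%:R / dot w w) *: (w^T *m w).

Lemma reflmx_apply x w : x *m reflmx w = x - (2%:R / dot w w * dot x w) *: w.
Proof.
rewrite /reflmx mulmxBr mulmx1 -scalemxAr mulmxA.
by rewrite [x *m w^T]mx11_scalar mul_scalar_mx scalerA.
Qed.

Lemma reflmx_fix x w : dot x w = 0 -> x *m reflmx w = x.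
Proof. by move=> xw; rewrite reflmx_apply xw mulr0 scale0r subr0. Qed.

Lemma reflmx_self w : dot w w \is a GRing.unit -> w *m reflmx w = - w.
Proof.
move=> uw; rewrite reflmx_apply divrK // -[X in X - _]scale1r -scalerBl.
by rewrite -scaleN1r; congr (_ *: _); ring.
Qed.

Lemma reflmxK x w : dot w w \is a GRing.unit -> x *m reflmx w *m reflmx w = x.
Proof.
move=> uw; rewrite [x *m _]reflmx_apply mulmxBl -scalemxAl reflmx_self // reflmx_apply.
by apply/rowP => j; rewrite !mxE; ring.
Qed.

Lemma orthogonal_reflmx w : dot w w \is a GRing.unit -> orthogonal_mx (reflmx w).
Proof.
move=> uw; rewrite /orthogonal_mx; have -> : (reflmx w)^T = reflmx w.
  by rewrite /reflmx linearB /= linearZ /= trmx1 trmx_mul trmxK.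
by apply/row_matrixP => i; rewrite !rowE mulmxA reflmxK // mulmx1.
Qed.

Lemma reflmx_sub z y : dot z z = dot y y ->
  dot (z - y) (z - y) \is a GRing.unit -> z *m reflmx (z - y) = y.
Proof.
move=> zy u; have e : 2%:R * dot z (z - y) = dot (z - y) (z - y).
  by rewrite !dotBl !dotBr (dotC y z) zy; ring.
by rewrite reflmx_apply mulrAC e divrr // scale1r subKr.
Qed.

Lemma witt_step z y : dot z z = dot y y -> dot z z \is a GRing.unit ->
  exists Q, [/\ orthogonal_mx Q, z *m Q = y &
                forall x, dot x z = 0 -> dot x y = 0 -> x *m Q = x].
Proof.
move=> zy uz; have uy : dot y y \is a GRing.unit by rewrite -zy.
have [u1|nu1] := boolP (dot (z - y) (z - y) \is a GRing.unit).
  exists (reflmx (z - y)); split; [exact: orthogonal_reflmx|exact: reflmx_sub|].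
  by move=> x xz xy; rewrite reflmx_fix // dotBr xz xy subrr.
(* the norms of z + y and z - y add up to the unit 4 dot z z, and A is local *)
have u2 : dot (z + y) (z + y) \is a GRing.unit.
  have e : dot (z + y) (z + y) = 2%:R * 2%:R * dot z z - dot (z - y) (z - y).
    by rewrite !dotBl !dotBr !dotDl !dotDr (dotC y z) -zy; ring.
  move: nu1; rewrite e !residue_unitE negbK => /eqP h.
  by rewrite rmorphB h subr0 !rmorphM !mulf_neq0 // -residue_unitE.
exists (reflmx (z + y) *m reflmx y); split.
- by apply: orthogonal_mxM; exact: orthogonal_reflmx.
- rewrite mulmxA; have := @reflmx_sub z (- y).
  rewrite opprK dotNl dotNr opprK => -> //.
  by rewrite mulNmx reflmx_self ?opprK.
- move=> x xz xy; rewrite mulmxA [x *m _]reflmx_fix ?reflmx_fix //.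
  by rewrite dotDr xz xy addr0.
Qed.

Definition isometric_pairs (L : seq ('rV[A]_n * 'rV[A]_n)) : bool :=
  [&& pairwise (fun p q => dot p.1 q.1 == 0) L,
      pairwise (fun p q => dot p.2 q.2 == 0) L &
      all (fun p => (dot p.1 p.1 == dot p.2 p.2) && (dot p.1 p.1 \is a GRing.unit)) L].

Lemma witt_extension L : isometric_pairs L ->
  exists Q, orthogonal_mx Q /\ forall p, p \in L -> p.1 *m Q = p.2.
Proof.
elim: L => [|[z y] L IH].
  by exists 1%:M; split => //; rewrite /orthogonal_mx trmx1 mulmx1.
rewrite /isometric_pairs !pairwise_cons /= => /and3P [/andP [/allP z_L oL1]
  /andP [/allP y_L oL2] /andP [/andP [/eqP zy uz] iL]].
have [Q1 [oQ1 Q1L]] := IH (introT and3P (And3 oL1 oL2 iL)).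
have := @witt_step (z *m Q1) y; rewrite !dot_orthogonal_mx //.
move=> /(_ zy uz) [Q2 [oQ2 Q2z Q2fix]].
exists (Q1 *m Q2); split; first exact: orthogonal_mxM.
move=> p; rewrite inE => /orP [/eqP -> /=|pL]; first by rewrite mulmxA.
rewrite mulmxA Q1L // Q2fix //; last by rewrite dotC; apply/eqP; exact: y_L.
by rewrite -(Q1L p pL) dot_orthogonal_mx // dotC; apply/eqP; exact: z_L.
Qed.

Lemma perp_unit_vector_of_isometric L e : isometric_pairs L -> dot e e = 1 ->
  (forall p, p \in L -> dot e p.2 = 0) ->
  exists x, qf x = 1 /\ forall p, p \in L -> dot x p.1 = 0.
Proof.
move=> iL ee eL; have [Q [oQ QL]] := witt_extension iL.
have oQT := orthogonal_mx_tr oQ.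
exists (e *m Q^T); split; first by rewrite qf_dot dot_orthogonal_mx.
move=> p pL; rewrite -[p.1]mulmx1 -oQ mulmxA dot_orthogonal_mx // QL //; exact: eL.
Qed.

Definition is_basis (W : 'rV[A]_n -> Prop) d (B : 'I_d -> 'rV[A]_n) : Prop :=
  [/\ forall i, W (B i),
      forall y, W y -> exists a : 'I_d -> A, y = \sum_i a i *: B i &
      forall a : 'I_d -> A, \sum_i a i *: B i = 0 -> forall i, a i = 0].

Lemma is_basis_delta : is_basis (perp [::]) (fun i : 'I_n => delta_mx 0 i).
Proof.
split=> // [y _|a a0 i]; first by exists (fun i => y 0 i); exact: row_sum_delta.
move/rowP: a0 => /(_ i); rewrite summxE mxE (bigD1 i) //= big1 => [|j ji].
  by rewrite !mxE !eqxx mulr1 addr0.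
by rewrite !mxE eq_sym (negPf ji) mulr0.
Qed.

Lemma exists_unit_coef r d (B : 'I_d -> 'rV[A]_n) (c : 'I_d -> A) :
  dot r r \is a GRing.unit -> r = \sum_i c i *: B i -> exists i, c i \is a GRing.unit.
Proof.
move=> ur er; apply/existsP; apply: contraLR ur => /existsPn nc.
rewrite residue_unitE negbK {2}er dot_sumr rmorph_sum; apply/eqP; apply: big1 => i _.
by rewrite dotZr rmorphM; move: (nc i); rewrite residue_unitE negbK => /eqP ->; rewrite mul0r.
Qed.

Section Exchange.
Variables (F : seq 'rV[A]_n) (r : 'rV[A]_n) (d : nat).
Variables (B : 'I_d.+1 -> 'rV[A]_n) (c : 'I_d.+1 -> A) (i0 : 'I_d.+1).
Hypotheses (hB : is_basis (perp F) B) (rF : perp F r) (ur : dot r r \is a GRing.unit).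
Hypotheses (er : r = \sum_i c i *: B i) (uc : c i0 \is a GRing.unit).

Let B' j := B (lift i0 j) - proj [:: r] (B (lift i0 j)).

Lemma perp_cons_exchange : forall j, perp (r :: F) (B' j).
Proof.
case: hB => BF _ _ j f; rewrite inE => /orP [/eqP ->|].
  by apply: perp_sub_proj; rewrite ?mem_head // /unit_orthogonal /= ur.
by move: f; apply: perpB; rewrite ?proj1E; [exact: BF | exact: perpZ].
Qed.

Lemma span_exchange y : perp (r :: F) y -> exists a : 'I_d -> A, y = \sum_j a j *: B' j.
Proof.
case: hB => _ Bspan _ yrF.
have yF : perp F y by move=> f fF; apply: yrF; rewrite inE fF orbT.
have yr : perp [:: r] y by move=> f; rewrite inE => /eqP ->; apply: yrF; rewrite mem_head.
have [a ea] := Bspan y yF; pose t := a i0 / c i0.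
exists (fun j => a (lift i0 j) - t * c (lift i0 j)).
have ytr : y - t *: r = \sum_j (a (lift i0 j) - t * c (lift i0 j)) *: B (lift i0 j).
  rewrite {1}ea er scaler_sumr -sumrB.
  under eq_bigr do rewrite scalerA -scalerBl.
  by rewrite (bigD1_ord i0) //= /t divrK // subrr scale0r add0r.
rewrite /B'; under eq_bigr do rewrite scalerBr.
rewrite sumrB -proj_sum -ytr projB projZ proj_perp // proj1E divrr // scale1r.
by rewrite sub0r opprK subrK.
Qed.

Lemma free_exchange (a : 'I_d -> A) : \sum_j a j *: B' j = 0 -> forall j, a j = 0.
Proof.
case: hB => _ _ Bfree a0.
pose S := \sum_j a j *: B (lift i0 j).
have SB' : S - proj [:: r] S = 0.
  by rewrite -a0 proj_sum -sumrB; apply: eq_bigr => j _; rewrite scalerBr.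
pose mu := dot S r / dot r r.
pose b i := (if unlift i0 i is Some j then a j else 0) - mu * c i.
have b0 : \sum_i b i *: B i = 0.
  under eq_bigr do rewrite scalerBl -scalerA.
  rewrite sumrB -scaler_sumr -er (bigD1_ord i0) //= unlift_none scale0r add0r.
  under eq_bigr do rewrite liftK.
  by rewrite proj1E in SB'.
have mu0 : mu = 0.
  move: (Bfree _ b0 i0); rewrite /b unlift_none sub0r => /eqP; rewrite oppr_eq0.
  by rewrite mulf_eq0 (negPf (unit_neq0 uc)) orbF => /eqP.
by move=> j; move: (Bfree _ b0 (lift i0 j)); rewrite /b liftK mu0 mul0r subr0.
Qed.

Lemma is_basis_exchange : is_basis (perp (r :: F)) B'.
Proof. by split; [exact: perp_cons_exchange|exact: span_exchange|exact: free_exchange]. Qed.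

End Exchange.

Lemma perp_basis F : unit_orthogonal F ->
  exists B : 'I_(n - size F) -> 'rV[A]_n, is_basis (perp F) B.
Proof.
elim: F => [|r F IH].
  by rewrite subn0; exists (fun i => delta_mx 0 i); exact: is_basis_delta.
rewrite unit_orthogonal_cons => /and3P [ur /allP rF oF].
have rF' : perp F r by move=> f /rF /eqP; rewrite dotC.
have [B hB] := IH oF; have [_ Bspan _] := hB; have [c er] := Bspan r rF'.
have [i0 uc] := exists_unit_coef ur er.
rewrite /= subnS; move: B c i0 hB er uc {Bspan}; case: (n - size F)%N => [|d] B c i0.
  by case: i0.
by move=> hB er uc; eexists; exact: is_basis_exchange hB rF' ur er uc.
Qed.

Lemma res_dim_of_basis (W : 'rV[A]_n -> Prop) d (B : 'I_d -> 'rV[A]_n) :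
  is_basis W B -> res_dim W d.
Proof.
case=> BW Bspan Bfree; exists B; split => // [y /Bspan [a ->]|a [l [c [x [cm xW ex]]]] i].
  exists a, 0%N, (fun _ => 0), (fun _ => 0); split; try by case.
  by rewrite big_ord0 subrr.
have /choice [bx ebx] : forall j, exists b : 'I_d -> A, x j = \sum_i b i *: B i.
  by move=> j; exact: Bspan.
pose g i := \sum_j c j * bx j i.
have ag : \sum_i (a i - g i) *: B i = 0.
  under eq_bigr do rewrite scalerBl.
  rewrite sumrB ex; apply/eqP; rewrite subr_eq0; apply/eqP.
  under eq_bigr do rewrite ebx scaler_sumr.
  rewrite exchange_big /=; apply: eq_bigr => i' _.
  by rewrite /g scaler_suml; apply: eq_bigr => j _; rewrite scalerA.
have /eqP := Bfree _ ag i; rewrite subr_eq0 => /eqP ->.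
case: Hk => _ ker; apply/ker; rewrite /g rmorph_sum big1 // => j _.
by rewrite rmorphM (ker _).2 ?mul0r.
Qed.

Lemma perp_quadratic_submodule F : unit_orthogonal F -> quadratic_submodule (perp F).
Proof.
move=> oF; split.
  by split=> [|x y|a x]; [exact: perp0|exact: perpD|exact: perpZ].
exists (fun x => proj F x = x); split.
- by split=> [|x y ex ey|a x ex]; rewrite ?proj0 ?projD ?projZ ?ex ?ey.
- by move=> x xF <-; rewrite proj_perp.
- move=> z; exists (z - proj F z), (proj F z); split; first exact: perp_sub_proj.
    by rewrite /= {1}/proj; apply: eq_big_seq => f fF; rewrite dot_proj.
  by rewrite subrK.
Qed.

Lemma perp_nonsingular F : unit_orthogonal F -> nonsingular (perp F).
Proof.
move=> oF; pose b j := delta_mx 0 j - proj F (delta_mx 0 j).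
have bF j : perp F (b j) by exact: perp_sub_proj.
split=> [x xF xW|f flin].
  apply/rowP => j; have /Bq_eq0 := xW _ (bF j).
  by rewrite dotBr (dotC x (proj _ _)) dot_proj_perp // subr0 dot_delta mxE.
have f0 : f 0 = 0.
  have := flin 1 0 0 (@perp0 _ _ F) (@perp0 _ _ F); rewrite scale1r addr0 mul1r.
  by move=> /esym /eqP; rewrite -subr_eq0 addrK => /eqP.
have f_sum s (c : 'I_n -> A) :
    f (\sum_(j <- s) c j *: b j) = \sum_(j <- s) c j * f (b j).
  elim: s => [|j s IH]; first by rewrite !big_nil f0.
  by rewrite !big_cons flin ?IH //; apply: perp_sum => i _; apply: perpZ.
pose x0 := \row_j (f (b j) / 2%:R).
exists (x0 - proj F x0); split=> [|w wF]; first exact: perp_sub_proj.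
have ew : w = \sum_j w 0 j *: b j.
  under eq_bigr do rewrite scalerBr.
  by rewrite sumrB -proj_sum -row_sum_delta proj_perp // subr0.
rewrite Bq_dot dotBl dot_proj_perp // subr0 {2}ew f_sum dotE mulr_sumr.
by apply: eq_bigr => j _; rewrite mxE mulrA [2%:R * _]mulrC divrK // mulrC.
Qed.

Lemma hensel_square (a b : A) : henselian pi -> pi a = pi b -> pi b != 0 ->
  exists l, b * l ^+ 2 = a.
Proof.
move=> hen ab b0; pose f := b *: 'X^2 - a%:P.
have ef : map_poly pi f = pi b *: 'X^2 - (pi a)%:P.
  by rewrite rmorphB /= map_polyZ map_polyXn map_polyC.
have f1 : root (map_poly pi f) 1 by rewrite /root ef !hornerE /= !mulr1 ab subrr.
have df1 : ~~ root (map_poly pi f)^`() 1.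
  rewrite /root ef derivB derivZ derivXn derivC subr0 !hornerE /= mulf_neq0 //.
  by have := H2; rewrite residue_unitE rmorphD rmorph1.
have [l [fl _]] := hen f 1 f1 df1.
by exists l; apply/eqP; rewrite -subr_eq0; move: fl; rewrite /root !hornerE.
Qed.

Lemma sum_squares_lift P m (x : 'I_m -> A) : henselian pi -> pyth_bound k P ->
  (\sum_i x i ^+ 2) \is a GRing.unit ->
  exists z : nat -> A, \sum_(l < P) z l ^+ 2 = \sum_i x i ^+ 2.
Proof.
move=> hen hP ux; have [y ey] := hP m (fun i => pi (x i)).
have /choice [g pig] : forall c : k, exists a : A, pi a = c by case: Hk.
pose z l := if insub l is Some i then g (y i) else 0 : A.
have zx : pi (\sum_(l < P) z l ^+ 2) = pi (\sum_i x i ^+ 2).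
  rewrite rmorph_sum (eq_bigr (fun l => y l ^+ 2)) => [|l _]; last first.
    by rewrite rmorphXn /z valK pig.
  rewrite -/(sum_sq y) -ey /sum_sq rmorph_sum.
  by apply: eq_bigr => i _; rewrite rmorphXn.
have [c ec] : exists c, (\sum_(l < P) z l ^+ 2) * c ^+ 2 = \sum_i x i ^+ 2.
  by apply: hensel_square; rewrite // zx -residue_unitE.
exists (fun l => c * z l); rewrite -ec mulr_suml.
by apply: eq_bigr => l _; rewrite exprMn mulrC.
Qed.

Lemma unit_norm_of_formally_real w i0 : formally_real k -> w 0 i0 = 1 ->
  dot w w \is a GRing.unit.
Proof.
move=> fr w1; rewrite residue_unitE; apply/negP => /eqP w0; apply: fr.
exists n, (fun i => if i == i0 then 0 else pi (w 0 i)).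
rewrite /sum_sq (bigD1 i0) //= eqxx expr0n add0r.
rewrite (eq_bigr (fun i => pi (w 0 i) ^+ 2)); last by move=> i /negPf ->.
move: w0; rewrite dotE rmorph_sum (bigD1 i0) //= w1 mulr1 rmorph1 => /eqP.
rewrite addrC addr_eq0 => /eqP <-; apply: eq_bigr => i _.
by rewrite rmorphM expr2.
Qed.

Lemma isotropic_split F w y : perp F w -> perp F y -> dot w y = 1 -> pi (dot w w) = 0 ->
  exists z1 z2, [/\ perp F z1, perp F z2, unit_orthogonal [:: z1; z2] &
                   forall x, dot x z1 = 0 -> dot x z2 = 0 -> dot x w = 0].
Proof.
move=> wF yF wy ww.
(* the norms of y and w + y differ by 2 modulo the maximal ideal *)
pose z1 := if dot y y \is a GRing.unit then y else w + y.
have [z1F uz1 wz1] : [/\ perp F z1, dot z1 z1 \is a GRing.unit & pi (dot w z1) = 1].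
  rewrite /z1; case: ifP => [uy|/negbT]; first by rewrite wy rmorph1.
  rewrite residue_unitE negbK => /eqP yy; split; first exact: perpD.
    rewrite residue_unitE !dotDl !dotDr (dotC y w) !rmorphD ww yy wy rmorph1 add0r addr0.
    by have := H2; rewrite residue_unitE rmorphD rmorph1.
  by rewrite dotDr wy rmorphD ww rmorph1 add0r.
pose a := dot w z1 / dot z1 z1; pose z2 := w - a *: z1.
have z2z1 : dot z2 z1 = 0 by rewrite dotBl dotZl /a divrK // subrr.
have uz2 : dot z2 z2 \is a GRing.unit.
  have : dot z2 z2 * dot z1 z1 = dot w w * dot z1 z1 - dot w z1 ^+ 2.
    have wz : dot w z1 = a * dot z1 z1 by rewrite /a divrK.
    by rewrite /z2 !dotBl !dotBr !dotZl !dotZr (dotC z1 w) wz; ring.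
  move/(congr1 pi); rewrite rmorphB !rmorphM ww wz1 mul0r mulr1 sub0r => e.
  rewrite residue_unitE; apply: contra_eqN e => /eqP ->.
  by rewrite mul0r eq_sym oppr_eq0 oner_eq0.
have z2F : perp F z2 by apply: perpB => //; exact: perpZ.
exists z1, z2; split => //; first by rewrite /unit_orthogonal /= uz1 uz2 dotC z2z1 eqxx.
by move=> x xz1 xz2; rewrite -(subrK (a *: z1) w) -/z2 dotDr dotZr xz1 xz2 mulr0 addr0.
Qed.

Hypothesis HA : valuation_ring A.

Lemma valuation_dvd_total (a b : A) : (exists c, b = c * a) \/ (exists c, a = c * b).
Proof.
have [->|a0] := eqVneq a 0; first by right; exists 0; rewrite mul0r.
have [->|b0] := eqVneq b 0; first by left; exists 0; rewrite mul0r.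
have ab0 : FracField.tofrac a / FracField.tofrac b != 0.
  by rewrite mulf_neq0 ?invr_eq0 ?tofrac_eq0.
case: (HA ab0) => [[c ec]|[c ec]]; [right|left]; exists c.
  by apply/eqP; rewrite -tofrac_eq tofracM -ec divfK ?tofrac_eq0.
by apply/eqP; rewrite -tofrac_eq tofracM -ec invf_div divfK ?tofrac_eq0.
Qed.

Lemma valuation_min_divisor (a0 : A) (s : seq A) :
  exists2 a, a \in a0 :: s & forall b, b \in a0 :: s -> exists c, b = c * a.
Proof.
elim: s => [|b s [a a_s amin]].
  by exists a0 => [|b]; rewrite ?mem_head // inE => /eqP ->; exists 1; rewrite mul1r.
have mem t : (t \in a0 :: b :: s) = (t == b) || (t \in a0 :: s) by rewrite !inE orbCA.
case: (valuation_dvd_total a b) => [[c bc]|[c ac]].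
  exists a; first by rewrite mem a_s orbT.
  by move=> t; rewrite mem => /orP [/eqP ->|/amin //]; exists c.
exists b => [|t]; first by rewrite mem eqxx.
rewrite mem => /orP [/eqP ->|/amin [c' ->]]; first by exists 1; rewrite mul1r.
by exists (c' * c); rewrite ac mulrA.
Qed.

Lemma primitive_decomposition w : w != 0 ->
  exists c w0 i0, [/\ w = c *: w0, w0 0 i0 = 1 & c != 0].
Proof.
move=> wn0; have [j0 wj0] : exists j0, w 0 j0 != 0.
  apply/existsP; apply: contraR wn0 => /existsPn wz; apply/eqP/rowP => j.
  by rewrite mxE; apply/eqP; move: (wz j); rewrite negbK.
have [a aw amin] := valuation_min_divisor (w 0 j0) [seq w 0 i | i <- enum 'I_n].
have [i0 ea] : exists i0, a = w 0 i0.
  by move: aw; rewrite inE => /orP [/eqP ->|/mapP [i _ ->]]; eexists.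
subst a.
have /choice [f ef] : forall i, exists c, w 0 i = c * w 0 i0.
  by move=> i; apply: amin; rewrite inE map_f ?mem_enum ?orbT.
have wi0 : w 0 i0 != 0 by apply: contraNneq wj0 => wi0; rewrite ef wi0 mulr0.
exists (w 0 i0), (\row_i f i), i0; split => //.
  by apply/rowP => j; rewrite !mxE ef mulrC.
by rewrite mxE; apply: (mulIf wi0); rewrite mul1r -ef.
Qed.

Lemma extend_unit_orthogonal1 F w : unit_orthogonal F -> exists E,
  [/\ unit_orthogonal (F ++ E), (size E <= 2)%N, (formally_real k -> (size E <= 1)%N) &
      forall x, perp (F ++ E) x -> dot x w = 0].
Proof.
move=> oF; wlog wF : w / perp F w.
  move=> hw; have [E [oE sE fE Ew]] := hw _ (perp_sub_proj w oF).
  exists E; split => // x /[dup] /perp_cat [xF _] /Ew.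
  by rewrite dotBr (dotC x (proj _ _)) dot_proj_perp // subr0.
have [->|wn0] := eqVneq w 0.
  by exists [::]; rewrite cats0; split=> // x _; rewrite dot0r.
have [c [w0 [i0 [ew w0i0 c0]]]] := primitive_decomposition wn0.
have w0F : perp F w0.
  move=> f /wF; rewrite ew dotZl => /eqP; rewrite mulf_eq0 (negPf c0) => /eqP //.
suff [E [oE sE fE Ew0]] : exists E, [/\ unit_orthogonal (F ++ E), (size E <= 2)%N,
    (formally_real k -> (size E <= 1)%N) & forall x, perp (F ++ E) x -> dot x w0 = 0].
  by exists E; split => // x /Ew0 xw0; rewrite ew dotZr xw0 mulr0.
have [uw0|nuw0] := boolP (dot w0 w0 \is a GRing.unit).
  exists [:: w0]; split => //; last by move=> x /perp_cat [_]; apply; rewrite mem_head.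
  apply: unit_orthogonal_catP => //; first by rewrite /unit_orthogonal /= uw0.
  by move=> e; rewrite inE => /eqP ->.
pose y := delta_mx 0 i0 - proj F (delta_mx 0 i0).
have w0y : dot w0 y = 1 by rewrite dotBr dot_delta w0i0 (dotC w0) dot_proj_perp // subr0.
have ww : pi (dot w0 w0) = 0 by apply/eqP; move: nuw0; rewrite residue_unitE negbK.
have [z1 [z2 [z1F z2F oz hz]]] := isotropic_split w0F (perp_sub_proj _ oF) w0y ww.
exists [:: z1; z2]; split => //.
- by apply: unit_orthogonal_catP => // e; rewrite !inE => /orP [] /eqP ->.
- by move=> fr; case/negP: nuw0; exact: unit_norm_of_formally_real fr w0i0.
- by move=> x /perp_cat [_ xz]; apply: hz; apply: xz; rewrite !inE eqxx ?orbT.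
Qed.

Lemma extend_unit_orthogonal G F : unit_orthogonal F -> exists E,
  [/\ unit_orthogonal (F ++ E), (size E <= 2 * size G)%N,
      (formally_real k -> (size E <= size G)%N) & forall x, perp (F ++ E) x -> perp G x].
Proof.
elim: G F => [|w G IH] F oF; first by exists [::]; rewrite cats0; split.
have [E1 [o1 s1 f1 E1w]] := extend_unit_orthogonal1 w oF.
have [E2 [o2 s2 f2 E2G]] := IH _ o1.
exists (E1 ++ E2); rewrite catA; split => //.
- by rewrite size_cat /= mulnSr addnC leq_add.
- by move=> fr; rewrite size_cat /= -(add1n (size G)) leq_add ?f1 ?f2.
- move=> x /[dup] /E2G xG /perp_cat [/E1w xw _] f.
  by rewrite inE => /orP [/eqP ->|/xG].
Qed.

Lemma perp_unit_vector_mA F G m b : unit_orthogonal F -> mA A = Some m ->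
  (2 * size G <= b)%N \/ (formally_real k /\ (size G <= b)%N) ->
  (m + size F + b <= n)%N ->
  exists x, [/\ perp F x, perp G x & qf x = 1].
Proof.
move=> oF hm hb hn; have [E [oE sE fE EG]] := extend_unit_orthogonal G oF.
have Eb : (size E <= b)%N by case: hb => [h|[/fE h h']]; lia.
have [B hB] := perp_basis oE.
have [|x [xFE ux]] := mA_good_Some hm (perp_quadratic_submodule oE) (perp_nonsingular oE).
  exists (n - size (F ++ E))%N; split; first exact: res_dim_of_basis hB.
  by rewrite size_cat; lia.
by exists x; split => //; [case/perp_cat: xFE | exact: EG].
Qed.

Lemma perp_unit_vector_of_squares F1 F2 P :
  unit_orthogonal (F1 ++ F2) -> all (fun f => dot f f == 1) F1 ->
  (forall f, f \in F2 -> exists z : nat -> A, \sum_(l < P) z l ^+ 2 = dot f f) ->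
  (size F1 + P * size F2 < n)%N -> exists x, qf x = 1 /\ perp (F1 ++ F2) x.
Proof.
move=> oF F1n F2s hn.
have F1s f : f \in F1 -> exists z : nat -> A, \sum_(l < 1) z l ^+ 2 = dot f f.
  by move=> /(allP F1n) /eqP ->; exists (fun _ => 1); rewrite big_ord1 expr1n.
have [|L1 [L1F L1n L1o L1s]] := disjoint_block_copies F1s (o := 0).
  by rewrite add0n mul1n (leq_trans (leq_addr _ _) (ltnW hn)).
have [|L2 [L2F L2n L2o L2s]] := disjoint_block_copies F2s (o := size F1).
  exact: ltnW.
have LF : map fst (L1 ++ L2) = F1 ++ F2 by rewrite map_cat L1F L2F.
have iL : isometric_pairs (L1 ++ L2).
  apply/and3P; split.
  - by rewrite -(pairwise_map fst (fun a b => dot a b == 0)) LF; case/andP: oF.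
  - rewrite pairwise_cat L1o L2o !andbT; apply/allrelP => p q /L1s sp /L2s sq.
    by rewrite add0n mul1n in sp; apply/eqP; exact: dot_supported sp sq.
  - apply/allP => p pL; have : p.1 \in F1 ++ F2 by rewrite -LF map_f.
    case/andP: oF => _ /allP uF /uF ->; rewrite andbT eq_sym.
    by move: pL; rewrite mem_cat => /orP [/(allP L1n)|/(allP L2n)].
have hn1 : (size F1 + P * size F2 <= n.-1)%N by rewrite -ltnS (ltn_predK hn).
have n0 : (n.-1 < n)%N by rewrite ltn_predL (leq_ltn_trans (leq0n _) hn).
pose e : 'rV[A]_n := delta_mx 0 (Ordinal n0).
have ee : dot e e = 1 by rewrite dot_delta mxE !eqxx.
have eL p : p \in L1 ++ L2 -> dot e p.2 = 0.
  rewrite dotC => pL; apply: (@dot_supported _ _ _ _ 0 n.-1 n).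
    move: pL; rewrite mem_cat => /orP [/L1s|/L2s] sp; apply: supported_widen sp _ _ => //.
    by rewrite add0n mul1n (leq_trans (leq_addr _ _) hn1).
  move=> i; rewrite mxE /=; case: eqP => [-> /=|//]; by rewrite leqnn n0.
have [x [ux xL]] := perp_unit_vector_of_isometric iL ee eL.
by exists x; split => // f; rewrite -LF => /mapP [p pL ->]; exact: xL.
Qed.

Lemma perp_unit_vector_henselian F G b : henselian pi -> unit_orthogonal F ->
  all (fun f => dot f f == 1) F ->
  (2 * size G <= b)%N \/ (formally_real k /\ (size G <= b)%N) ->
  match Pyth k with
  | Some p => (size F + p * b < n)%N
  | None => (size G == 0%N) && (size F < n)%N
  end ->
  exists x, [/\ perp F x, perp G x & qf x = 1].
Proof.
move=> hen oF F1 hb hn; have [E [oE sE fE EG]] := extend_unit_orthogonal G oF.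
have Eb : (size E <= b)%N by case: hb => [h|[/fE h h']]; lia.
suff [P [EP hP]] : exists P, (forall e, e \in E ->
    exists z : nat -> A, \sum_(l < P) z l ^+ 2 = dot e e) /\ (size F + P * size E < n)%N.
  have [x [ux xFE]] := perp_unit_vector_of_squares oE F1 EP hP.
  by exists x; split => //; [case/perp_cat: xFE | exact: EG].
case eP : (Pyth k) hn => [p|] hn; last first.
  case/andP: hn => /eqP G0 Fn.
  have E0 : E = [::] by apply: size0nil; move: sE; rewrite G0; lia.
  by exists 0%N; rewrite E0 muln0 addn0.
exists p; split; last by rewrite (leq_ltn_trans _ hn) // leq_add2l leq_mul2l Eb orbT.
move=> e eE; rewrite -qf_dot; apply: sum_squares_lift (pyth_bound_Some eP) _ => //.
rewrite -/(qf e) qf_dot; case/andP: oE => _ /allP; apply.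
by rewrite mem_cat eE orbT.
Qed.

Lemma frame_unit_orthogonal r (u : 'I_r -> 'rV[A]_n) :
  is_frame u -> unit_orthogonal [seq u i | i <- enum 'I_r].
Proof.
case=> u1 uo; apply/andP; split.
  rewrite pairwise_map; apply: (@sub_pairwise _ (fun i j : 'I_r => i != j)).
    by move=> i j /= ij; apply/eqP/Bq_eq0; exact: uo.
  by rewrite -uniq_pairwise enum_uniq.
by apply/allP => _ /mapP [i _ ->]; rewrite -qf_dot u1 unitr1.
Qed.

Lemma frame_norm1 r (u : 'I_r -> 'rV[A]_n) :
  is_frame u -> all (fun f => dot f f == 1) [seq u i | i <- enum 'I_r].
Proof. by case=> u1 _; apply/allP => _ /mapP [i _ ->]; rewrite -qf_dot u1. Qed.

Lemma orth_span_of_perp r (u : 'I_r -> 'rV[A]_n) x :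
  perp [seq u i | i <- enum 'I_r] x -> orth (span_of u) x.
Proof.
move=> xu y [c ->]; apply/Bq_eq0; rewrite dot_sumr big1 // => i _.
by rewrite dotZr xu ?mulr0 // map_f ?mem_enum.
Qed.

End LocalRing.

Theorem proposition2p10 (A : idomainType) (k : fieldType) (pi : {rmorphism A -> k})
  (HA : valuation_ring A) (Hk : residue_map pi)
  (H2 : (2%:R : A) \is a GRing.unit)
  (n r s : nat) (u : 'I_r -> 'rV[A]_n) (v : 'I_s -> 'rV[A]_n)
  (Hu : is_frame u) (Hv : is_frame v) :
  [\/ (exists m, mA A = Some m /\ (m + r + 2 * s <= n)%N),
      (exists m, mA A = Some m /\ (m + r + s <= n)%N /\ formally_real k),
      (henselian pi /\
         match Pyth k with
         | Some p => (2 * p * r + s < n)%N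
         | None => r = 0%N /\ (s < n)%N
         end)
    | (henselian pi /\ formally_real k /\
         match Pyth k with
         | Some p => (p * r + s < n)%N
         | None => r = 0%N /\ (s < n)%N
         end)] ->
  exists x : 'rV[A]_n, [/\ orth (span_of u) x, orth (span_of v) x & unit_vector x].
Proof.
move=> cases; pose us := [seq u i | i <- enum 'I_r]; pose vs := [seq v i | i <- enum 'I_s].
have size_us : size us = r by rewrite size_map size_enum_ord.
have size_vs : size vs = s by rewrite size_map size_enum_ord.
have ou := frame_unit_orthogonal H2 Hu; have ov := frame_unit_orthogonal H2 Hv.
suff [x [xu xv ux]] : exists x, [/\ perp us x, perp vs x & qf x = 1].
  by exists x; split => //; apply: orth_span_of_perp.
case: cases => [[m [hm hn]]|[m [hm [hn fr]]]|[hen hP]|[hen [fr hP]]].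
- apply: (perp_unit_vector_mA Hk H2 HA (b := 2 * s)) ou hm _ _.
  + by left; rewrite size_vs.
  + by rewrite size_us.
- apply: (perp_unit_vector_mA Hk H2 HA (b := s)) ou hm _ _.
  + by right; rewrite size_vs.
  + by rewrite size_us.
- suff [x [xv xu ux]] : exists x, [/\ perp vs x, perp us x & qf x = 1] by exists x.
  apply: (perp_unit_vector_henselian Hk H2 HA (b := 2 * r)) => //.
  + exact: frame_norm1.
  + by left; rewrite size_us.
  + by case: (Pyth k) hP => [p hP|[r0 sn]]; rewrite size_vs ?size_us; [nia|rewrite r0 sn].
- suff [x [xv xu ux]] : exists x, [/\ perp vs x, perp us x & qf x = 1] by exists x.
  apply: (perp_unit_vector_henselian Hk H2 HA (b := r)) => //.
  + exact: frame_norm1.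
  + by right; rewrite size_us.
  + by case: (Pyth k) hP => [p hP|[r0 sn]]; rewrite size_vs ?size_us; [nia|rewrite r0 sn].
Qed.
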